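(* Let $n\ge1$, with notation as in the context. Then for $0\le l\le k,k_1\le n-1$, $$\sum_{i=1}^n f_{kl}(\alpha_i)f_{k_1l}(\alpha_i)T_1(\alpha_i)\cdots T_l(\alpha_i)=\delta_{k,k_1}c_{kl},$$ and for $0\le l\le n-1$ and all $i,j\in\{l+1,\dots,n\}$, $$\sum_{k=l}^{n-1}\frac{1}{c_{kl}}f_{kl}(\alpha_i)f_{kl}(\alpha_j)T_1(\alpha_i)\cdots T_l(\alpha_i)=\delta_{ij}.$$
   Context: Principal embedding of $\mathfrak{sl}(2)$ in $\mathfrak{gl}(n)$: $Y=\sum_{i=1}^{n-1}E_{i+1,i}$, $H=\sum_{i=1}^n(n-2i+1)E_{ii}$, $X=\sum_{i=1}^{n-1}i(n-i)E_{i,i+1}$. $\alpha_i=n-2i+1$, $T_i(H)=\frac14(n^2-(H+2i-1)^2)$; for a polynomial $f$, $f(H)=\mathrm{diag}(f(\alpha_1),\dots,f(\alpha_n))$. For $0\le l\le k\le n-1$, $f_{kl}$ is the unique polynomial of degree $<n-l$ with $(\mathrm{ad}\,Y)^{k-l}(X^k)=X^lf_{kl}(H)$. Empty products of $T$'s equal $1$. $c_{kl}=\dfrac{(k-l)!\,(k!)^2}{(k+l)!\,(2k+1)}\,n(n^2-1^2)\cdots(n^2-k^2)$. *)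

From HB Require Import structures.
From mathcomp Require Import all_boot all_order all_algebra.
Set Implicit Arguments. Unset Strict Implicit. Unset Printing Implicit Defensive.
Import Order.TTheory GRing.Theory Num.Theory.
Local Open Scope ring_scope.

Section Principal.
Variables (R : numFieldType) (n : nat).

(* alpha_i = n - 2i + 1, with i 1-based (i = 1..n) *)
Definition alpha (i : nat) : R := n%:R - 2 * i%:R + 1.

(* matrix index (0-based) j : 'I_n corresponds to the 1-based index j+1 *)
Definition Ymx : 'M[R]_n := \matrix_(i, j) (if i == j.+1 :> nat then 1 else 0).
Definition Xmx : 'M[R]_n :=
  \matrix_(i, j) (if i.+1 == j :> nat then (i.+1 * (n - i.+1))%:R else 0).
Definition polyH (f : {poly R}) : 'M[R]_n :=
  \matrix_(i, j) (if i == j then f.[alpha i.+1] else 0).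
Definition Hmx : 'M[R]_n := polyH 'X.

Definition mxpow (A : 'M[R]_n) (k : nat) : 'M[R]_n := iter k (mulmx A) 1%:M.
Definition adY (A : 'M[R]_n) : 'M[R]_n := Ymx *m A - A *m Ymx.

Definition Tval (i : nat) (x : R) : R :=
  (n%:R ^+ 2 - (x + 2 * i%:R - 1) ^+ 2) / 4.
Definition Tprod (l : nat) (x : R) : R := \prod_(1 <= m < l.+1) Tval m x.

Definition ckl (k l : nat) : R :=
  ((k - l)`! * (k`! ^ 2))%:R / (((k + l)`! * (2 * k + 1))%:R)
  * (n%:R * \prod_(1 <= m < k.+1) (n%:R ^+ 2 - m%:R ^+ 2)).

Definition is_fkl (k l : nat) (f : {poly R}) : Prop :=
  (size f <= n - l)%N /\
  iter (k - l) adY (mxpow Xmx k) = mxpow Xmx l *m polyH f.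
End Principal.
Arguments alpha {R} n i.

From HB Require Import structures.
From mathcomp Require Import all_boot all_order all_algebra.
From mathcomp Require Import ring zify.
Import Order.TTheory GRing.Theory Num.Theory.
Local Open Scope ring_scope.
Set Implicit Arguments. Unset Strict Implicit. Unset Printing Implicit Defensive.

(* Let D be the invertible diagonal matrix with X^T D = D Y and put
   theta(B) = D^-1 B^T D, an anti-involution exchanging X and Y.  For the
   trace form <A, B> = tr (A theta(B)), ad Y is adjoint to ad X.  By the
   defining property of f_kl, the first sum is
   <(ad Y)^(k-l) X^k, (ad Y)^(k1-l) X^k1> = <X^k, (ad X)^(k-l) (ad Y)^(k1-l) X^k1>,
   and X^k1 is a highest weight vector of weight 2 k1 for the adjoint sl2
   action, so this vanishes for k > k1 and equals (k-l)! (2k)^_(k-l) <X^k, X^k>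
   for k = k1.  Finally <X^k, X^k> = tr (Y^k X^k) = sum_i T_1 ... T_k (alpha_i)
   is a Chu-Vandermonde sum.  The second identity restates the first as a
   left inverse of a square matrix of values f_kl(alpha_i), i > l, which is
   then also a right inverse. *)

Section Bracket.
Variables (R : comPzRingType) (p : nat).
Implicit Types (A B C : 'M[R]_p) (c : R).

Definition bracket A B := A *m B - B *m A.

Lemma bracket_jacobi A B C :
  bracket A (bracket B C) = bracket B (bracket A C) + bracket (bracket A B) C.
Proof.
rewrite /bracket !mulmxBl !mulmxBr !mulmxA; apply/matrixP => i j.
rewrite !mxE; ring.
Qed.

Lemma bracketMr A B C : bracket A (B *m C) = bracket A B *m C + B *m bracket A C.
Proof.
rewrite /bracket !mulmxBl !mulmxBr !mulmxA; apply/matrixP => i j.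
rewrite !mxE; ring.
Qed.

Lemma bracketZl c A B : bracket (c *: A) B = c *: bracket A B.
Proof. by rewrite /bracket -scalemxAl -scalemxAr scalerBr. Qed.

Lemma bracketZr c A B : bracket A (c *: B) = c *: bracket A B.
Proof. by rewrite /bracket -scalemxAl -scalemxAr scalerBr. Qed.

Lemma iter_bracketZr k c A B :
  iter k (bracket A) (c *: B) = c *: iter k (bracket A) B.
Proof. by elim: k => //= k ->; rewrite bracketZr. Qed.

Lemma iter_bracket0r k A : iter k (bracket A) 0 = 0.
Proof. by elim: k => //= k ->; rewrite /bracket mulmx0 mul0mx subrr. Qed.

Section HighestWeightVector.
Variables (X Y H v : 'M[R]_p) (lam : R).
Hypotheses (bracketXY : bracket X Y = H) (bracketHY : bracket H Y = - (2 *: Y)).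
Hypotheses (bracketXv : bracket X v = 0) (bracketHv : bracket H v = lam *: v).

Local Notation lower j := (iter j (bracket Y) v).

Lemma bracketH_lower j : bracket H (lower j) = (lam - 2 * j%:R) *: lower j.
Proof.
elim: j => [|j IH] /=; first by rewrite bracketHv mulr0 subr0.
rewrite bracket_jacobi IH bracketHY bracketZr -scaleNr bracketZl -scalerDl.
by congr (_ *: _); rewrite -addn1 natrD; ring.
Qed.

Lemma bracketX_lower j :
  bracket X (lower j.+1) = (j.+1%:R * (lam - j%:R)) *: lower j.
Proof.
elim: j => [|j IH].
  by rewrite /= bracket_jacobi bracketXv bracketXY bracketHv /bracket !mulmx0 !mul0mx
    subrr add0r mul1r subr0.
rewrite iterS bracket_jacobi IH bracketZr bracketXY bracketH_lower -scalerDl.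
by congr (_ *: _); rewrite -[j.+2]addn1 -[j.+1]addn1 !natrD; ring.
Qed.

Lemma raise_lower b :
  iter b (bracket X) (lower b) = (\prod_(j < b) (j.+1%:R * (lam - j%:R))) *: v.
Proof.
elim: b => [|b IH]; first by rewrite big_ord0 scale1r.
by rewrite iterSr bracketX_lower iter_bracketZr IH scalerA big_ord_recr /= mulrC.
Qed.

Lemma raise_lower_eq0 a b : (b < a)%N -> iter a (bracket X) (lower b) = 0.
Proof.
move=> ltba; rewrite -(subnK ltba) iterD iterS raise_lower bracketZr bracketXv.
by rewrite iter_bracketZr iter_bracket0r scaler0.
Qed.

End HighestWeightVector.
End Bracket.

Lemma Vandermonde_upper N a b :
  (\sum_(q < N.+1) 'C(q, a) * 'C(N - q, b) = 'C(N.+1, a + b + 1))%N.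
Proof.
elim: N b => [|N IH] b.
  by rewrite big_ord1 subn0 !bin0n addn1 binS !bin0n; case: a b => [|a] [|b].
rewrite big_ord_recr /= subnn.
case: b => [|b].
  have sum_bin : (\sum_(q < N.+1) 'C(q, a) = 'C(N.+1, a.+1))%N.
    have := IH 0; rewrite addn0 addn1 => <-.
    by apply: eq_bigr => q _; rewrite bin0 muln1.
  rewrite bin0 muln1 addn0 addn1 binS -sum_bin.
  by congr (_ + _); apply: eq_bigr => q _; rewrite bin0 muln1.
have binSsub (q : 'I_N.+1) : 'C(N.+1 - q, b.+1) = 'C(N - q, b.+1) + 'C(N - q, b).
  by rewrite subSn ?binS // -ltnS.
under eq_bigr do rewrite binSsub mulnDr.
by rewrite big_split /= !IH muln0 addn0 !addn1 addnS binS.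
Qed.

Lemma prod_succ_mul_sub (R : comPzRingType) a c : (a <= c)%N ->
  \prod_(j < a) (j.+1%:R * (c%:R - j%:R)) = (a`! * c ^_ a)%:R :> R.
Proof.
elim: a => [|a IH] leac; first by rewrite big_ord0 fact0 ffactn0.
rewrite big_ord_recr /= IH ?(ltnW leac) // factS ffactnSr !natrM natrB ?(ltnW leac) //.
by ring.
Qed.

Lemma natr_prod_sqr_sub (R : comPzRingType) N k : (k <= N)%N ->
  N%:R * \prod_(1 <= j < k.+1) (N%:R ^+ 2 - j%:R ^+ 2) = ((N + k) ^_ k.*2.+1)%:R :> R.
Proof.
elim: k => [|k IH] lekN; first by rewrite big_geq // mulr1 addn0 ffactn1.
rewrite big_nat_recr //= mulrA IH ?(ltnW lekN) //.
rewrite doubleS addnS ffactSS (ffactnSr (N + k) k.*2.+1) -addnS.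
rewrite (_ : N + k - k.*2.+1 = N - k.+1)%N; last by lia.
rewrite !natrM natrD natrB //; ring.
Qed.

Lemma sum_ord_eq_nat (R : nmodType) n c (F : 'I_n.+1 -> R) :
  \sum_(k < n.+1) (if (k : nat) == c then F k else 0) =
  if (c < n.+1)%N then F (inord c) else 0.
Proof.
rewrite -big_mkcond /=; case: ltnP => [ltcn | lenc].
  by rewrite (big_pred1 (inord c)) // => k; rewrite /= -val_eqE /= inordK.
by rewrite big_pred0 // => k; rewrite ltn_eqF // (leq_trans (ltn_ord k)).
Qed.

Lemma big_nat_ord_shift (V : nmodType) l N (F : nat -> V) :
  \sum_(l <= i < N) F i = \sum_(b < N - l) F (b + l)%N.
Proof. by rewrite -{1}(add0n l) big_addn big_mkord. Qed.

Lemma sum_ord_drop_zeros (V : nmodType) l N (F : nat -> V) :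
  (l <= N)%N -> (forall i, (i < l)%N -> F i = 0) ->
  \sum_(i < N) F i = \sum_(l <= i < N) F i.
Proof.
move=> lelN F0; rewrite -(big_mkord xpredT F) (big_cat_nat _ (n := l)) //=.
rewrite big1_seq ?add0r // => i.
by rewrite mem_index_iota => /andP[_ /F0].
Qed.

Lemma orthogonal_rows_cols (F : fieldType) d (P : 'M[F]_d) (w c : 'I_d -> F) :
  (forall a, c a != 0) ->
  (forall a a', \sum_b P a b * P a' b * w b = if a == a' then c a else 0) ->
  forall b b', \sum_a (c a)^-1 * P a b * P a b' * w b = if b == b' then 1 else 0.
Proof.
move=> c_neq0 rows b b'.
pose A := \matrix_(b, a) (w b * P a b).
pose B := \matrix_(a, b) ((c a)^-1 * P a b).
have BA : B *m A = 1%:M.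
  apply/matrixP => a a'; rewrite !mxE.
  transitivity ((c a)^-1 * \sum_b P a b * P a' b * w b).
    by rewrite big_distrr /=; apply: eq_bigr => k _; rewrite !mxE; ring.
  by rewrite rows; case: eqP => [->|_]; rewrite ?mulVf ?mulr0.
have /matrixP/(_ b b') := mulmx1C BA; rewrite !mxE => AB.
transitivity ((b == b')%:R : F); last by case: eqP.
by rewrite -AB; apply: eq_bigr => a _; rewrite !mxE; ring.
Qed.

Section Principal.
Variables (R : numFieldType) (m : nat).
Local Notation n := m.+1.
Local Notation X := (Xmx R n).
Local Notation Y := (Ymx R n).
Local Notation H := (Hmx R n).
Implicit Types (M : 'M[R]_n) (g : nat -> R).

Definition xsup (i : nat) : R := (i.+1 * (n - i.+1))%:R.

Lemma Tval_alpha k p :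
  Tval n k (alpha n p) = (p%:R - k%:R) * (n%:R - p%:R + k%:R) :> R.
Proof. by rewrite /Tval /alpha; field. Qed.

Lemma TprodS l (x : R) : Tprod n l.+1 x = Tval n 1 x * Tprod n l (x + 2).
Proof.
rewrite /Tprod big_ltn // big_add1; congr (_ * _); apply: eq_bigr => k _.
by rewrite /Tval; congr ((_ - _ ^+ 2) / 4); ring.
Qed.

Lemma alphaS p : alpha n p.+1 + 2 = alpha n p :> R.
Proof. by rewrite /alpha; ring. Qed.

Lemma Tprod_alpha1 l : Tprod n l.+1 (alpha n 1) = 0 :> R.
Proof. by rewrite TprodS Tval_alpha subrr !mul0r. Qed.

Lemma Tprod_alphaS l i : (i < m)%N ->
  Tprod n l.+1 (alpha n i.+2) = xsup i * Tprod n l (alpha n i.+1).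
Proof.
move=> ltim; rewrite TprodS alphaS Tval_alpha /xsup natrM natrB 1?ltnW //.
by congr (_ * _); ring.
Qed.

Lemma Tprod_alpha_ffact l i : (i < n)%N ->
  Tprod n l (alpha n i.+1) = (i ^_ l * (n - i.+1 + l) ^_ l)%:R :> R.
Proof.
elim: l i => [|l IH] i lti; first by rewrite /Tprod big_geq.
case: i lti => [|i] lti; first by rewrite Tprod_alpha1.
rewrite Tprod_alphaS // IH 1?ltnW // /xsup -natrM; congr _%:R.
rewrite ffactSS ffactnSr (_ : n - i.+2 + l.+1 = n - i.+1 + l)%N; last by lia.
rewrite (_ : n - i.+1 + l - l = n - i.+1)%N; [ring | lia].
Qed.

Lemma sum_Tprod_alpha k : (k < n)%N ->
  \sum_(i < n) Tprod n k (alpha n i.+1) = (k`! ^ 2 * 'C(n + k, k.*2.+1))%:R :> R.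
Proof.
move=> ltkn; under eq_bigr => i _ do rewrite (Tprod_alpha_ffact _ (ltn_ord i)).
rewrite -natr_sum; congr _%:R.
have term_bin (i : 'I_n) :
    (i ^_ k * (n - i.+1 + k) ^_ k = k`! ^ 2 * ('C(i, k) * 'C(m + k - i, k)))%N.
  rewrite -!bin_ffact (_ : n - i.+1 + k = m + k - i)%N; first by ring.
  by have := ltn_ord i; lia.
under eq_bigr do rewrite term_bin.
rewrite -big_distrr /=; congr (_ * _)%N.
rewrite (_ : 'C(n + k, k.*2.+1) = 'C((m + k).+1, k + k + 1)); last first.
  by congr 'C(_, _); lia.
have le_n_mk : (n <= (m + k).+1)%N by rewrite ltnS leq_addr.
rewrite -Vandermonde_upper.
rewrite (big_ord_widen _ (fun q => 'C(q, k) * 'C(m + k - q, k))%N le_n_mk).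
rewrite big_mkcond /=; apply: eq_bigr => q _; case: ltnP => // ltmq.
by rewrite (@bin_small (m + k - q)) ?muln0 //; have := ltn_ord q; lia.
Qed.

Lemma cklE k l : (l <= k)%N -> (k < n)%N ->
  ckl R n k l = ((k - l)`! * k.*2 ^_ (k - l) * (k`! ^ 2 * 'C(n + k, k.*2.+1)))%:R.
Proof.
move=> lelk ltkn; rewrite /ckl natr_prod_sqr_sub 1?ltnW //.
have nz : ((k + l)`! * (2 * k + 1))%:R != 0 :> R.
  by rewrite pnatr_eq0 muln_eq0 negb_or -!lt0n fact_gt0 addn1.
rewrite mulrAC -natrM -[RHS](mulfK nz) -natrM; congr (_%:R / _).
rewrite -bin_ffact factS -(ffact_fact (_ : k - l <= k.*2)%N); last by lia.
rewrite (_ : k.*2 - (k - l) = k + l)%N; last by lia.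
by rewrite -!mul2n addn1; ring.
Qed.

Lemma ckl_neq0 k l : (l <= k)%N -> (k < n)%N -> ckl R n k l != 0.
Proof.
move=> lelk ltkn; rewrite cklE // pnatr_eq0 -lt0n !muln_gt0 !fact_gt0 ffact_gt0.
by rewrite bin_gt0 /=; lia.
Qed.

Lemma Tprod_alpha_eq0 l i :
  (i < l)%N -> (i < n)%N -> Tprod n l (alpha n i.+1) = 0 :> R.
Proof. by move=> ltil ltin; rewrite Tprod_alpha_ffact // ffact_small. Qed.

Lemma mulYmxE M i j :
  (Y *m M) i j = if (i : nat) is i'.+1 then M (inord i') j else 0.
Proof.
rewrite mxE; case: i => [[|i] lti] /=.
  by rewrite big1 // => k _; rewrite mxE mul0r.
rewrite (eq_bigr (fun k : 'I_n => if (k : nat) == i then M (inord i) j else 0)).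
  by rewrite sum_ord_eq_nat ltnW.
move=> k _; rewrite mxE eqSS eq_sym; case: eqP => [<-|]; last by rewrite mul0r.
by rewrite mul1r inord_val.
Qed.

Lemma mulmxXE M i j :
  (M *m X) i j = if (j : nat) is j'.+1 then M i (inord j') * xsup j' else 0.
Proof.
rewrite mxE; case: j => [[|j] ltj] /=.
  by rewrite big1 // => k _; rewrite mxE mulr0.
rewrite (eq_bigr (fun k : 'I_n =>
  if (k : nat) == j then M i (inord j) * xsup j else 0)).
  by rewrite sum_ord_eq_nat ltnW.
move=> k _; rewrite mxE eqSS; case: eqP => [<-|]; last by rewrite mulr0.
by rewrite inord_val.
Qed.

Lemma mulXmxE M i j :
  (X *m M) i j = if (i.+1 < n)%N then xsup i * M (inord i.+1) j else 0.
Proof.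
rewrite mxE (eq_bigr (fun k : 'I_n =>
  if (k : nat) == i.+1 then xsup i * M (inord i.+1) j else 0)).
  by rewrite sum_ord_eq_nat.
move=> k _; rewrite mxE eq_sym; case: eqP => [eq_ki|]; last by rewrite mul0r.
by rewrite (_ : inord i.+1 = k) //; apply: val_inj; rewrite /= -eq_ki inordK // eq_ki.
Qed.

Lemma polyH_diag (f : {poly R}) :
  polyH n f = diag_mx (\row_(i < n) f.[alpha n i.+1]).
Proof. by apply/matrixP => i j; rewrite !mxE; case: eqP. Qed.

Lemma mulXY : X *m Y = diag_mx (\row_(i < n) xsup i).
Proof.
apply/matrixP => i j; rewrite mulXmxE !mxE -val_eqE /=.
case: ltnP => [lt_in|le_ni]; last first.
  have -> : nat_of_ord i = m by have := ltn_ord i; lia.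
  by rewrite /xsup subnn muln0 mul0rn.
by rewrite inordK // eqSS; case: eqP; rewrite ?mulr1 ?mulr0.
Qed.

Lemma mulY_diag_X g :
  Y *m diag_mx (\row_(i < n) g i) *m X =
  diag_mx (\row_(i < n) if (i : nat) is i'.+1 then g i' * xsup i' else 0).
Proof.
apply/matrixP => i j; rewrite mulmxXE !mxE -val_eqE /=.
case: j => [[|j] ltj] /=; first by case: i => [[|i] lti]; rewrite ?mulr0n.
rewrite mulYmxE; case: i => [[|i] lti] /=; first by rewrite mul0r mulr0n.
rewrite eqSS !mxE -val_eqE /= !inordK ?(ltnW lti) ?(ltnW ltj) //.
by case: eqP => [->|]; rewrite ?mulr1n ?mul0r ?mulr0n.
Qed.

Lemma bracket_XY : bracket X Y = H.
Proof.
rewrite /bracket.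
have -> : Y *m X = Y *m diag_mx (\row_(i < n) 1) *m X.
  rewrite -[in LHS](mulmx1 Y) -diag_const_mx; congr (_ *m diag_mx _ *m _).
  by apply/rowP => i; rewrite !mxE.
rewrite mulXY (mulY_diag_X (fun _ => 1)) /Hmx polyH_diag -raddfB /=.
congr diag_mx; apply/rowP => i; rewrite !mxE hornerX /alpha /xsup.
have lti := ltn_ord i; case: (nat_of_ord i) lti => [|i'] lti.
  by rewrite subr0 natrM natrB //; ring.
by rewrite mul1r !natrM !natrB ?(ltnW lti) //; ring.
Qed.

Lemma bracket_HX : bracket H X = 2 *: X.
Proof.
rewrite /bracket /Hmx polyH_diag mul_diag_mx mul_mx_diag.
apply/matrixP => i j; rewrite !mxE !hornerX /alpha.
case: eqP => [<-|_]; last by rewrite !(mulr0, mul0r) subrr.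
by ring.
Qed.

Lemma bracket_HY : bracket H Y = - (2 *: Y).
Proof.
rewrite /bracket /Hmx polyH_diag mul_diag_mx mul_mx_diag.
apply/matrixP => i j; rewrite !mxE !hornerX /alpha.
case: eqP => [->|_]; last by rewrite !(mulr0, mul0r) subrr oppr0.
by ring.
Qed.

Lemma mxpowS (A : 'M[R]_n) k : mxpow A k.+1 = A *m mxpow A k.
Proof. by []. Qed.

Lemma mxpowSr (A : 'M[R]_n) k : mxpow A k.+1 = mxpow A k *m A.
Proof.
elim: k => [|k IH]; first by rewrite /mxpow /= mulmx1 mul1mx.
by rewrite [LHS]mxpowS {1}IH mulmxA.
Qed.

Lemma mxpowY_mxpowX l :
  mxpow Y l *m mxpow X l = diag_mx (\row_(i < n) Tprod n l (alpha n i.+1)).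
Proof.
elim: l => [|l IH].
  rewrite /mxpow /= mulmx1 -diag_const_mx; congr diag_mx; apply/rowP => i.
  by rewrite !mxE /Tprod big_geq.
rewrite mxpowS mxpowSr mulmxA -(mulmxA Y) IH.
rewrite (mulY_diag_X (fun i => Tprod n l (alpha n i.+1))); congr diag_mx.
apply/rowP => i; rewrite !mxE.
by case: i => [[|i] lti] /=; rewrite ?Tprod_alpha1 // Tprod_alphaS // mulrC.
Qed.

Lemma bracketX_mxpowX k : bracket X (mxpow X k) = 0.
Proof. by rewrite /bracket -mxpowSr mxpowS subrr. Qed.

Lemma bracketH_mxpowX k : bracket H (mxpow X k) = (2 * k%:R) *: mxpow X k.
Proof.
elim: k => [|k IH].
  by rewrite /bracket /mxpow /= mulmx1 mul1mx subrr mulr0 scale0r.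
rewrite mxpowS bracketMr bracket_HX IH -scalemxAl -scalemxAr -scalerDl.
by congr (_ *: _); ring.
Qed.

Definition dscale (i : nat) : R := \prod_(k < i) xsup k.

Definition Dmx : 'M[R]_n := diag_mx (\row_(i < n) dscale i).

Lemma Dmx_unit : Dmx \in unitmx.
Proof.
rewrite unitmxE det_diag unitfE; apply/prodf_neq0 => i _; rewrite mxE.
apply/prodf_neq0 => k _; rewrite /xsup pnatr_eq0 muln_eq0 negb_or.
by have := ltn_ord k; have := ltn_ord i; lia.
Qed.

Lemma trX_mulD : X^T *m Dmx = Dmx *m Y.
Proof.
rewrite mul_diag_mx mul_mx_diag; apply/matrixP => i j; rewrite !mxE eq_sym.
case: eqP => [->|_]; last by rewrite mul0r mulr0.
by rewrite mulr1 /dscale big_ord_recr mulrC.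
Qed.

Definition theta (A : 'M[R]_n) : 'M[R]_n := invmx Dmx *m A^T *m Dmx.

Lemma thetaM A B : theta (A *m B) = theta B *m theta A.
Proof. by rewrite /theta trmx_mul !mulmxA mulmxK ?Dmx_unit. Qed.

Lemma thetaB A B : theta (A - B) = theta A - theta B.
Proof. by rewrite /theta linearB /= mulmxBr mulmxBl. Qed.

Lemma theta_X : theta X = Y.
Proof. by rewrite /theta -mulmxA trX_mulD mulKmx ?Dmx_unit. Qed.

Lemma theta_diag d : theta (diag_mx d) = diag_mx d.
Proof. by rewrite /theta tr_diag_mx -mulmxA /Dmx diag_mxC mulKmx ?Dmx_unit. Qed.

Lemma theta_mxpowX l : theta (mxpow X l) = mxpow Y l.
Proof.
elim: l => [|l IH]; first by rewrite /theta /mxpow /= trmx1 mulmx1 mulVmx ?Dmx_unit.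
by rewrite mxpowSr thetaM IH theta_X.
Qed.

Definition pairing (A B : 'M[R]_n) : R := \tr (A *m theta B).

Lemma pairing_adY A B : pairing (adY A) B = pairing A (bracket X B).
Proof.
rewrite /pairing /adY /bracket thetaB !thetaM theta_X.
rewrite mulmxBl mulmxBr !linearB /= -!mulmxA mxtrace_mulC -!mulmxA.
by rewrite [\tr (A *m (Y *m _))]mxtrace_mulC -!mulmxA.
Qed.

Lemma pairing_iter_adY k A B :
  pairing (iter k (@adY R n) A) B = pairing A (iter k (bracket X) B).
Proof. by elim: k B => [|k IH] B //=; rewrite pairing_adY IH -iterSr. Qed.

Lemma pairingZr A c B : pairing A (c *: B) = c * pairing A B.
Proof.
by rewrite /pairing /theta linearZ /= -scalemxAr -scalemxAl -scalemxAr mxtraceZ.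
Qed.

Lemma pairing_mxpowX_diag l a b :
  pairing (mxpow X l *m diag_mx a) (mxpow X l *m diag_mx b) =
  \sum_(i < n) a 0 i * b 0 i * Tprod n l (alpha n i.+1).
Proof.
rewrite /pairing thetaM theta_diag theta_mxpowX mulmxA -mulmxA mxtrace_mulC.
rewrite mulmxA -(mulmxA (diag_mx b)) mxpowY_mxpowX !mulmx_diag mxtrace_diag.
by apply: eq_bigr => i _; rewrite !mxE; ring.
Qed.

Lemma pairing_mxpowX l :
  pairing (mxpow X l) (mxpow X l) = \sum_(i < n) Tprod n l (alpha n i.+1).
Proof.
rewrite /pairing theta_mxpowX mxtrace_mulC mxpowY_mxpowX mxtrace_diag.
by apply: eq_bigr => i _; rewrite mxE.
Qed.

End Principal.

Section Orthogonality.
Variables (R : numFieldType) (m : nat) (f : nat -> nat -> {poly R}).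
Local Notation n := m.+1.
Local Notation X := (Xmx R n).
Local Notation fval k l i := ((f k l).[alpha n i.+1]).
Local Notation Tw l i := (Tprod n l (alpha n i.+1)).
Hypothesis f_is_fkl : forall k l, (l <= k <= m)%N -> is_fkl n k l (f k l).

Lemma sum_fkl_pairing l k k1 : (l <= k <= m)%N -> (l <= k1 <= m)%N ->
  \sum_(i < n) fval k l i * fval k1 l i * Tw l i =
  pairing (iter (k - l) (@adY R n) (mxpow X k))
          (iter (k1 - l) (@adY R n) (mxpow X k1)).
Proof.
move=> /f_is_fkl[_ ->] /f_is_fkl[_ ->].
rewrite !polyH_diag pairing_mxpowX_diag.
by apply: eq_bigr => i _; rewrite !mxE.
Qed.

Lemma fkl_orthogonal_le l k k1 : (l <= k1 <= k)%N -> (k <= m)%N ->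
  \sum_(i < n) fval k l i * fval k1 l i * Tw l i = if k == k1 then ckl R n k l else 0.
Proof.
move=> /andP[lelk1 lek1k] lekm.
rewrite sum_fkl_pairing ?lelk1 ?(leq_trans lelk1) ?(leq_trans lek1k) //.
have hwX := bracketX_mxpowX R m k1; have hwH := bracketH_mxpowX R m k1.
rewrite pairing_iter_adY; case: eqP => [eq_kk1|ne_kk1].
  rewrite -eq_kk1 in hwX hwH *.
  rewrite (raise_lower (bracket_XY R m) (bracket_HY R m) hwX hwH) pairingZr.
  rewrite pairing_mxpowX sum_Tprod_alpha 1?(leq_ltn_trans lekm) //.
  rewrite cklE 1?(leq_trans lelk1) ?(leq_ltn_trans lekm) //.
  have le_kl_2k : (k - l <= k.*2)%N by lia.
  rewrite (_ : 2 * k%:R = k.*2%:R :> R); last by rewrite -mul2n natrM.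
  by rewrite prod_succ_mul_sub // -!natrM.
rewrite (raise_lower_eq0 (bracket_XY R m) (bracket_HY R m) hwX hwH).
  by rewrite -(scale0r 0) pairingZr mul0r.
by lia.
Qed.

Lemma fkl_orthogonal l k k1 : (l <= k <= m)%N -> (l <= k1 <= m)%N ->
  \sum_(i < n) fval k l i * fval k1 l i * Tw l i = if k == k1 then ckl R n k l else 0.
Proof.
move=> /andP[lelk lekm] /andP[lelk1 lek1m].
have [lek1k | ltkk1] := leqP k1 k; first by rewrite fkl_orthogonal_le ?lelk1.
under eq_bigr do rewrite [_ * (f k1 l).[_]]mulrC.
by rewrite fkl_orthogonal_le ?lelk ?(ltnW ltkk1) // gtn_eqF // ltn_eqF.
Qed.

Lemma fkl_dual l : (l <= m)%N -> forall i j : 'I_n, (l <= i)%N -> (l <= j)%N ->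
  \sum_(l <= k < n) (ckl R n k l)^-1 * fval k l i * fval k l j * Tw l i =
  if i == j then 1 else 0.
Proof.
move=> lelm i j leli lelj.
pose P : 'M[R]_(n - l) := \matrix_(a, b) fval (a + l)%N l (b + l)%N.
have c_neq0 (a : 'I_(n - l)) : ckl R n (a + l) l != 0.
  by rewrite ckl_neq0 ?leq_addl //; have := ltn_ord a; lia.
have rows (a1 a2 : 'I_(n - l)) :
    \sum_b P a1 b * P a2 b * Tw l (b + l)%N =
    if a1 == a2 then ckl R n (a1 + l) l else 0.
  have lta1 := ltn_ord a1; have lta2 := ltn_ord a2.
  rewrite -val_eqE /= -(eqn_add2r l) -fkl_orthogonal; try by apply/andP; split; lia.
  have zeros x : (x < l)%N -> fval (a1 + l)%N l x * fval (a2 + l)%N l x * Tw l x = 0.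
    by move=> ltxl; rewrite Tprod_alpha_eq0 ?mulr0 //; lia.
  rewrite (sum_ord_drop_zeros (leqW lelm) zeros) big_nat_ord_shift.
  by apply: eq_bigr => b _; rewrite !mxE.
have lt_il : (i - l < n - l)%N by have := ltn_ord i; lia.
have lt_jl : (j - l < n - l)%N by have := ltn_ord j; lia.
have := orthogonal_rows_cols c_neq0 rows (Ordinal lt_il) (Ordinal lt_jl).
rewrite -val_eqE /= eqn_sub2rE // big_nat_ord_shift => <-.
by apply: eq_bigr => a _; rewrite !mxE /= !subnK.
Qed.

End Orthogonality.

Theorem proposition8p3p1 (R : numFieldType) (n : nat) (f : nat -> nat -> {poly R}) :
  (0 < n)%N ->
  (forall k l, (l <= k <= n.-1)%N -> is_fkl n k l (f k l)) ->
  (forall l k k1, (l <= k <= n.-1)%N -> (l <= k1 <= n.-1)%N ->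
     \sum_(i < n) (f k l).[alpha n i.+1] * (f k1 l).[alpha n i.+1]
                  * Tprod n l (alpha n i.+1)
     = if k == k1 then ckl R n k l else 0)
  /\
  (forall l, (l <= n.-1)%N -> forall i j : 'I_n, (l <= i)%N -> (l <= j)%N ->
     \sum_(l <= k < n) (ckl R n k l)^-1 * (f k l).[alpha n i.+1]
                       * (f k l).[alpha n j.+1] * Tprod n l (alpha n i.+1)
     = if i == j then 1 else 0).
Proof.
case: n => [|m] // _ f_is_fkl.
by split; [exact: fkl_orthogonal | exact: fkl_dual].
Qed.
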